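(* Let $p$ be a prime and $m\geq 2$ an integer. For real $x$ let $\omega=\frac{x+\sqrt{x^2+4}}{2}$, and let $i=\sqrt{-1}$. (a) If $p=2$ and $2\mid m$, then $\Psi_{2m}(x)=-i^{\varphi(m)}\Psi_m\!\left(i\omega^2-(i\omega^2)^{-1}\right)=-i^{\varphi(m)}\Psi_m(i(x^2+2))$ when $m=2$, and $\Psi_{2m}(x)=i^{\varphi(m)}\Psi_m\!\left(i\omega^2-(i\omega^2)^{-1}\right)=i^{\varphi(m)}\Psi_m(i(x^2+2))$ when $m\geq3$. (b) If $p=2$ and $2\nmid m$, then $\Psi_{2m}(x)=i^{\varphi(m)}\Psi_m\!\left(i\omega-(i\omega)^{-1}\right)=i^{\varphi(m)}\Psi_m\!\left(i\sqrt{x^2+4}\right)$. (c) If $p>2$ and $p\mid m$, then $\Psi_{pm}(x)=\Psi_m(\omega^p-\omega^{-p})=\Psi_m(x\Psi_{2p}(x))$. (d) If $p>2$ and $p\nmid m$, then $\Psi_{pm}(x)=\dfrac{\Psi_m(\omega^p-\omega^{-p})}{\Psi_m(\omega-\omega^{-1})}=\dfrac{\Psi_m(x\Psi_{2p}(x))}{\Psi_m(x)}$.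
   Context: The Fibonacci polynomials are defined by $F_1(x)=1$, $F_2(x)=x$, and $F_n(x)=xF_{n-1}(x)+F_{n-2}(x)$ for $n\geq 3$. For $n\geq 2$, the $n$-th fibotomic polynomial $\Psi_n(x)\in\mathbb{Z}[x]$ is the product of the monic irreducible factors of $F_n(x)$ which are not factors of $F_k(x)$ for any $k<n$; also $\Psi_1(x)=1$. Thus $F_n(x)=\prod_{d\mid n}\Psi_d(x)$ for all $n\geq1$. $\varphi$ is Euler's totient function. *)

From mathcomp Require Import all_boot all_order all_algebra all_field.
Set Implicit Arguments. Unset Strict Implicit. Unset Printing Implicit Defensive.
Import Order.TTheory GRing.Theory Num.Theory.
Local Open Scope ring_scope.

Fixpoint fibpair (n : nat) : {poly algC} * {poly algC} :=
  match n with
  | 0%N => (0, 1)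
  | k.+1 => let '(a, b) := fibpair k in (b, 'X * b + a)
  end.

Definition fibpoly (n : nat) : {poly algC} := (fibpair n).1.

(* A list of all complex roots of F_n (with multiplicity), from the
   factorisation F_n = lead_coef F_n * prod (X - z) over algC. *)
Definition fibroots (n : nat) : seq algC :=
  sval (closed_field_poly_normal (fibpoly n)).

(* Over algC this is the
   product of the (distinct) monic irreducible factors of F_n in Z[x] which do
   not divide any F_k, k < n. *)
Definition fibotomic (n : nat) : {poly algC} :=
  if n == 1%N then 1 else
  \prod_(z <- undup (fibroots n) | all (fun k => ~~ root (fibpoly k) z) (iota 1 n.-1))
     ('X - z%:P).

(* Substituting x = t - t^-1 gives F_n(x) (t + t^-1) = t^n - (-t^-1)^n, so the
   roots of Psi_n are the t - t^-1 with -t^2 a primitive n-th root of unity,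
   each value being reached by exactly two t.  Counting these t gives
     Psi_n(t - t^-1) (-t)^phi(n) = Phi_n(-t^2),
   with Phi_n the n-th cyclotomic polynomial, and the four formulas become the
   classical identities Phi_pm(y) = Phi_m(y^p) for p | m,
   Phi_pm(y) Phi_m(y) = Phi_m(y^p) for p not dividing m,
   Phi_2m(y) = (-1)^phi(m) Phi_m(-y) for odd m and (y - 1) Phi_p(y) = y^p - 1,
   read at t = omega, for which t - t^-1 = x. *)

From mathcomp Require Import all_boot all_order all_algebra all_field.
From mathcomp Require Import ring.
Set Implicit Arguments. Unset Strict Implicit. Unset Printing Implicit Defensive.
Import Order.TTheory GRing.Theory Num.Theory.
Local Open Scope ring_scope.

Lemma prodrMl_seq (R : comNzRingType) (I : Type) (s : seq I) (F : I -> R) c :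
  \prod_(i <- s) (c * F i) = c ^+ size s * \prod_(i <- s) F i.
Proof. by elim: s => [|a s IH]; rewrite ?big_nil ?mulr1 // !big_cons IH exprS; ring. Qed.

Lemma size_flatten_map_const (T : eqType) (U : Type) (f : T -> seq U) (s : seq T) k :
  {in s, forall v, size (f v) = k} -> size (flatten (map f s)) = (k * size s)%N.
Proof.
elim: s => [|v s IH] fk /=; first by rewrite muln0.
by rewrite size_cat fk ?mem_head // IH ?mulnS // => u us; rewrite fk // inE us orbT.
Qed.

Lemma flatten_fibres (T U : eqType) (s : seq T) (f : T -> seq U) (h : U -> T) (P : pred U) :
  uniq s -> {in s, forall v, uniq (f v)} ->
  {in s, forall v w, (w \in f v) = P w && (h w == v)} ->
  uniq (flatten (map f s)) /\ (forall w, (w \in flatten (map f s)) = P w && (h w \in s)).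
Proof.
elim: s => [|v s IH] /=; first by split => // w; rewrite andbF.
move=> /andP[vs us] uf mf.
have [IHu IHm] : uniq (flatten (map f s)) /\
    (forall w, (w \in flatten (map f s)) = P w && (h w \in s)).
  by apply: IH => // u us'; [apply: uf | apply: mf]; rewrite inE us' orbT.
split => [|w]; last by rewrite mem_cat IHm mf ?mem_head // inE -andb_orr.
rewrite cat_uniq IHu uf ?mem_head // andbT /=.
apply/hasPn => w; rewrite IHm mf ?mem_head // => /andP[_ hs].
by apply/negP => /andP[_ /eqP hv]; rewrite -hv hs in vs.
Qed.

Lemma exprN_odd (R : pzRingType) (x : R) n : odd n -> (- x) ^+ n = - x ^+ n.
Proof. by move=> on; rewrite exprNn -signr_odd on mulN1r. Qed.

(** * Primitive roots of unity and Euler's totient *)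

Section PrimitiveRoots.
Variable R : idomainType.
Implicit Types (u w : R) (p m n : nat).

Lemma eq_prim_root_order m n u : m.-primitive_root u -> n.-primitive_root u -> m = n.
Proof.
move=> pm pn; apply/eqP; rewrite eqn_dvd (prim_order_dvd pm) (prim_order_dvd pn).
by rewrite (prim_expr_order pm) (prim_expr_order pn) !eqxx.
Qed.

Lemma prim_root1 n : n.-primitive_root (1 : R) -> n = 1%N.
Proof.
move=> pn; apply: (eq_prim_root_order pn); apply/andP; split => //.
by apply/forallP => -[[|i] //= _]; rewrite unity_rootE expr1n eqxx.
Qed.

Lemma prim_root_expr_prime p m w : prime p -> (0 < m)%N ->
  m.-primitive_root (w ^+ p)
    = (p * m)%N.-primitive_root w || ~~ (p %| m)%N && m.-primitive_root w.
Proof.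
move=> pp m0; have p0 := prime_gt0 pp; apply/idP/orP => [pw | [pw | /andP[pm pw]]].
- have pm0 : (0 < p * m)%N by rewrite muln_gt0 p0.
  have wpm : w ^+ (p * m) = 1 by rewrite exprM (prim_expr_order pw).
  have [d pd _] := prim_order_exists pm0 wpm.
  have /(eq_prim_root_order pw) md := exp_prim_root pd p.
  have [pd' | npd] := boolP (p %| d)%N.
    by left; rewrite md (gcdn_idPl pd') mulnC divnK.
  have /eqnP gpd : coprime p d by rewrite prime_coprime.
  move: md; rewrite gpd divn1 => md.
  by right; rewrite md npd.
- have := exp_prim_root pw p.
  by rewrite (gcdn_idPl (dvdn_mulr m (dvdnn p))) mulKn.
- have /eqnP gpm : coprime p m by rewrite prime_coprime.
  by have := exp_prim_root pw p; rewrite gpm divn1.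
Qed.

Lemma prim_root_expr_dvd p m w : prime p -> (0 < m)%N -> (p %| m)%N ->
  m.-primitive_root (w ^+ p) = (p * m)%N.-primitive_root w.
Proof. by move=> pp m0 pm; rewrite prim_root_expr_prime // pm orbF. Qed.

Lemma prim_root_expr_ndvd p m w : prime p -> (0 < m)%N -> ~~ (p %| m)%N ->
  m.-primitive_root (w ^+ p) = (p * m)%N.-primitive_root w || m.-primitive_root w.
Proof. by move=> pp m0 pm; rewrite prim_root_expr_prime // pm. Qed.

Lemma expr_prime_eq1 p w : prime p -> (w ^+ p == 1) = (w == 1) || p.-primitive_root w.
Proof.
move=> pp; apply/idP/orP => [/eqP wp1 | [/eqP -> | pw]]; last 2 first.
- by rewrite expr1n.
- by rewrite (prim_expr_order pw).
have [d pd /(primeP pp).2/orP[] /eqP dE] := prim_order_exists (prime_gt0 pp) wp1.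
  by left; move: (prim_expr_order pd); rewrite dE expr1 => ->.
by right; rewrite -dE.
Qed.

End PrimitiveRoots.

Lemma prim_rootN_odd (R : numDomainType) m (u : R) : odd m ->
  (2 * m)%N.-primitive_root u = m.-primitive_root (- u).
Proof.
move=> om; have m0 : (0 < m)%N by case: m om.
have m2 : ~~ (2 %| m)%N by rewrite dvdn2 om.
have not_prim (v : R) : v ^+ m = 1 -> ~~ (2 * m)%N.-primitive_root v.
  move=> vm1; apply/negP => pv; move: (prim_order_dvd pv m).
  by rewrite vm1 eqxx -{2}(mul1n m) dvdn_pmul2r.
apply/idP/idP => pu.
  have um : u ^+ m = -1.
    have : (u ^+ m) ^+ 2 == 1 by rewrite -exprM mulnC (prim_expr_order pu).
    by rewrite sqrf_eq1 => /orP[/eqP /not_prim | /eqP //]; rewrite pu.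
  have : m.-primitive_root ((- u) ^+ 2) by rewrite sqrrN prim_root_expr_ndvd // pu.
  rewrite prim_root_expr_ndvd // => /orP[pNu | //].
  have Num1 : (- u) ^+ m = 1 by rewrite exprN_odd // um opprK.
  by move: (not_prim (- u) Num1); rewrite pNu.
have : m.-primitive_root (u ^+ 2) by rewrite -sqrrN prim_root_expr_ndvd // pu orbT.
rewrite prim_root_expr_ndvd // => /orP[// | pu2].
have := prim_expr_order pu; rewrite exprN_odd // (prim_expr_order pu2) => /eqP.
by rewrite eq_sym -addr_eq0 -mulr2n pnatr_eq0.
Qed.

Lemma totient_double_odd m : odd m -> totient (2 * m) = totient m.
Proof. by move=> om; rewrite totient_coprime ?coprime2n // (totient_prime (isT : prime 2)) mul1n. Qed.

Section TotientEven.
Local Open Scope nat_scope.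

Lemma totient_even_odd_prime m q : 0 < m -> prime q -> odd q -> q %| m -> ~~ odd (totient m).
Proof.
move=> m0 pq oq qm; have qP : q \in primes m by rewrite mem_primes pq m0 qm.
rewrite totientE // (big_rem _ qP) /= !oddM.
by case: q oq {pq qm qP} => //= q /negPf ->.
Qed.

Lemma totient_even_4 m : 0 < m -> 4 %| m -> ~~ odd (totient m).
Proof.
move=> m0 m4; have qP : 2 \in primes m by rewrite mem_primes m0 (dvdn_trans _ m4).
have : 2 <= logn 2 m by rewrite -pfactor_dvdn.
rewrite totientE // (big_rem _ qP) /= !oddM oddX.
by case: (logn 2 m) => [|[|l]].
Qed.

Lemma totient_even m : 2 < m -> ~~ odd (totient m).
Proof.
move=> m2; have m0 : 0 < m by apply: leq_trans m2.
have odd_pdiv h : 1 < h -> odd h -> odd (pdiv h).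
  move=> h1 oh; apply: contraTT oh; rewrite -!dvdn2 => /dvdn_trans; apply.
  exact: pdiv_dvd.
have [om | em] := boolP (odd m).
  exact: totient_even_odd_prime m0 (pdiv_prime (ltnW m2)) (odd_pdiv _ (ltnW m2) om) (pdiv_dvd m).
have [m4 | m4] := boolP (4 %| m); first exact: totient_even_4.
have mh : m = (m %/ 2) * 2 by rewrite divnK // dvdn2.
have oh : odd (m %/ 2).
  by apply: contraNT m4; rewrite -dvdn2 => h2; rewrite mh; apply: (dvdn_mul h2 (dvdnn 2)).
have h1 : 1 < m %/ 2.
  by rewrite leq_divRL // ltn_neqAle m2 andbT; apply: contra em => /eqP <-.
apply: (totient_even_odd_prime m0 (pdiv_prime h1) (odd_pdiv _ h1 oh)).
by apply: dvdn_trans (pdiv_dvd _) _; rewrite {2}mh dvdn_mulr.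
Qed.

End TotientEven.

Lemma exprNi_totient n : (2 < n)%N -> (- 'i) ^+ totient n = 'i ^+ totient n :> algC.
Proof. by move/totient_even => en; rewrite exprNn -signr_odd (negPf en) mul1r. Qed.

(** * Cyclotomic polynomials over algC *)

Definition zeta (n : nat) : algC := sval (C_prim_root_exists (ltn0Sn n.-1)).

Lemma zetaP n : (0 < n)%N -> n.-primitive_root (zeta n).
Proof. by move=> n0; rewrite /zeta; case: C_prim_root_exists => z; rewrite prednK. Qed.

Definition prim_roots (n : nat) : seq algC :=
  [seq zeta n ^+ k | k <- iota 0 n & coprime k n].

Lemma mem_prim_roots n u : (0 < n)%N -> (u \in prim_roots n) = n.-primitive_root u.
Proof.
move=> n0; have z := zetaP n0; apply/mapP/idP => [[k] | pu].
  by rewrite mem_filter => /andP[ck _] ->; rewrite prim_root_exp_coprime.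
have [i ui] := prim_rootP z (prim_expr_order pu); exists (nat_of_ord i) => //.
by rewrite mem_filter mem_iota ltn_ord -(prim_root_exp_coprime _ z) -ui pu.
Qed.

Lemma uniq_prim_roots n : uniq (prim_roots n).
Proof.
case: n => [|n] //; have z := zetaP (ltn0Sn n).
rewrite map_inj_in_uniq ?filter_uniq ?iota_uniq // => i j.
rewrite !mem_filter !mem_iota /= => /andP[_ lti] /andP[_ ltj] /eqP.
by rewrite (eq_prim_root_expr z) !modn_small // => /eqP.
Qed.

Lemma size_prim_roots n : size (prim_roots n) = totient n.
Proof.
rewrite size_map size_filter totient_count_coprime -sum1_count big_mkcond /=.
by rewrite /index_iota subn0; apply: eq_bigr => i _; rewrite coprime_sym; case: coprime.
Qed.

Lemma prim_roots_neq0 n u : u \in prim_roots n -> u != 0.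
Proof.
case: n => [|n]; first by [].
by rewrite mem_prim_roots // => /prim_root_eq0 ->.
Qed.

Definition cyclo (n : nat) (y : algC) : algC := \prod_(u <- prim_roots n) (y - u).

Definition nth_roots (n : nat) (v : algC) : seq algC :=
  [seq n.-root v * zeta n ^+ k | k <- iota 0 n].

Lemma size_nth_roots n v : size (nth_roots n v) = n.
Proof. by rewrite size_map size_iota. Qed.

Section NthRoots.
Variables (n : nat) (v : algC).
Hypotheses (n0 : (0 < n)%N) (v0 : v != 0).
Let z := zetaP n0.
Let r := n.-root v.
Let rn : r ^+ n = v. Proof. exact: rootCK. Qed.
Let r0 : r != 0. Proof. by apply: contraNneq v0 => r0; rewrite -rn r0 expr0n gtn_eqF. Qed.

Lemma mem_nth_roots w : (w \in nth_roots n v) = (w ^+ n == v).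
Proof.
apply/mapP/eqP => [[k _ ->] | wn].
  by rewrite exprMn rn exprAC (prim_expr_order z) expr1n mulr1.
have /(prim_rootP z)[i wi] : (w / r) ^+ n = 1 by rewrite expr_div_n wn -rn divff // expf_neq0.
by exists (nat_of_ord i); rewrite ?mem_iota ?ltn_ord // -wi mulrCA mulfV ?mulr1.
Qed.

Lemma uniq_nth_roots : uniq (nth_roots n v).
Proof.
rewrite map_inj_in_uniq ?iota_uniq // => i j; rewrite !mem_iota /= => lti ltj.
by move/(mulfI r0)/eqP; rewrite (eq_prim_root_expr z) !modn_small // => /eqP.
Qed.

Lemma prod_nth_roots y : \prod_(w <- nth_roots n v) (y - w) = y ^+ n - v.
Proof.
have := congr1 (horner^~ (y / r)) (factor_Xn_sub_1 z).
rewrite horner_prod hornerD hornerN hornerXn hornerC => Xn1.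
transitivity (\prod_(k <- iota 0 n) (r * (y / r - zeta n ^+ k))).
  by rewrite big_map; apply: eq_bigr => k _; rewrite mulrBr mulrCA mulfV ?mulr1.
rewrite prodrMl_seq size_iota.
have -> : \prod_(k <- iota 0 n) (y / r - zeta n ^+ k) = (y / r) ^+ n - 1.
  by rewrite -Xn1 /index_iota subn0; apply: eq_bigr => k _; rewrite hornerXsubC.
by rewrite mulrBr -exprMn mulrCA mulfV // !mulr1 rn.
Qed.

End NthRoots.

Section CyclotomicPrimePower.
Variable p : nat.
Hypothesis pp : prime p.
Let p0 := prime_gt0 pp.

Let nth_roots_prim m := flatten (map (nth_roots p) (prim_roots m)).

Let nth_roots_primP m : (0 < m)%N ->
  uniq (nth_roots_prim m) /\
  forall w, (w \in nth_roots_prim m) = m.-primitive_root (w ^+ p).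
Proof.
move=> m0; have [U M] := @flatten_fibres _ _ (prim_roots m) (nth_roots p) (fun w => w ^+ p)
  predT (uniq_prim_roots m) (fun v vm => uniq_nth_roots p0 (prim_roots_neq0 vm))
  (fun v vm w => mem_nth_roots p0 (prim_roots_neq0 vm) w).
by split => // w; rewrite M mem_prim_roots.
Qed.

Let cyclo_expr m y : cyclo m (y ^+ p) = \prod_(w <- nth_roots_prim m) (y - w).
Proof.
rewrite big_flatten big_map; apply: eq_big_seq => v vm.
by rewrite prod_nth_roots // (prim_roots_neq0 vm).
Qed.

Let size_nth_roots_prim m : size (nth_roots_prim m) = (p * totient m)%N.
Proof.
by rewrite (@size_flatten_map_const _ _ _ _ p) ?size_prim_roots // => v _; rewrite size_nth_roots.
Qed.

Let perm_nth_roots_prim_dvd m : (0 < m)%N -> (p %| m)%N ->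
  perm_eq (nth_roots_prim m) (prim_roots (p * m)).
Proof.
move=> m0 pm; have [U M] := nth_roots_primP m0.
apply: uniq_perm => // [|w]; first exact: uniq_prim_roots.
by rewrite M mem_prim_roots ?muln_gt0 ?p0 // prim_root_expr_dvd.
Qed.

Lemma cyclo_expr_dvd m y : (0 < m)%N -> (p %| m)%N -> cyclo m (y ^+ p) = cyclo (p * m) y.
Proof. by move=> m0 pm; rewrite cyclo_expr (perm_big _ (perm_nth_roots_prim_dvd m0 pm)). Qed.

Lemma totient_mul_dvd m : (0 < m)%N -> (p %| m)%N -> totient (p * m) = (p * totient m)%N.
Proof.
move=> m0 pm.
by rewrite -size_prim_roots -(perm_size (perm_nth_roots_prim_dvd m0 pm)) size_nth_roots_prim.
Qed.

Lemma cyclo_expr_ndvd m y : (0 < m)%N -> ~~ (p %| m)%N ->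
  cyclo m (y ^+ p) = cyclo (p * m) y * cyclo m y.
Proof.
move=> m0 pm; have [U M] := nth_roots_primP m0.
have pm0 : (0 < p * m)%N by rewrite muln_gt0 p0.
suff E : perm_eq (nth_roots_prim m) (prim_roots (p * m) ++ prim_roots m).
  by rewrite cyclo_expr (perm_big _ E) big_cat.
apply: uniq_perm => // [|w]; last by rewrite M mem_cat !mem_prim_roots // prim_root_expr_ndvd.
rewrite cat_uniq !uniq_prim_roots andbT /=; apply/hasPn => w.
rewrite !mem_prim_roots // => pw; apply/negP => /(eq_prim_root_order pw)/eqP.
by rewrite -{1}(mul1n m) eqn_pmul2r // => /eqP p1; move: pp; rewrite -p1.
Qed.

Lemma cyclo_prime y : (y - 1) * cyclo p y = y ^+ p - 1.
Proof.
suff E : perm_eq (nth_roots p 1) (1 :: prim_roots p).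
  by rewrite -(prod_nth_roots p0 (oner_neq0 _)) (perm_big _ E) big_cons.
apply: uniq_perm => /= [||w]; rewrite ?uniq_nth_roots ?oner_neq0 ?uniq_prim_roots //.
  by rewrite andbT mem_prim_roots //; apply: contraL pp => /prim_root1 ->.
by rewrite mem_nth_roots ?oner_neq0 // inE expr_prime_eq1 // mem_prim_roots.
Qed.

End CyclotomicPrimePower.

Lemma cyclo_double_odd m y : odd m -> cyclo (2 * m) y = (-1) ^+ totient m * cyclo m (- y).
Proof.
move=> om; have m0 : (0 < m)%N by case: m om.
have E : perm_eq (prim_roots (2 * m)) (map -%R (prim_roots m)).
  apply: uniq_perm; rewrite ?(map_inj_uniq oppr_inj) ?uniq_prim_roots // => u.
  rewrite -[in RHS](opprK u) (mem_map oppr_inj) !mem_prim_roots ?muln_gt0 //.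
  exact: prim_rootN_odd.
rewrite /cyclo (perm_big _ E) big_map -size_prim_roots -prodrMl_seq.
by apply: eq_bigr => u _; rewrite mulN1r opprB !opprK addrC.
Qed.

(** * Fibonacci and fibotomic polynomials at t - t^-1 *)

Lemma horner_fibpair_sub_inv (t : algC) k : t != 0 ->
  (fibpair k).1.[t - t^-1] * (t + t^-1) = t ^+ k - (- t^-1) ^+ k /\
  (fibpair k).2.[t - t^-1] * (t + t^-1) = t ^+ k.+1 - (- t^-1) ^+ k.+1.
Proof.
move=> t0; elim: k => [|k [IH1 IH2]]; first by rewrite /= !hornerE subrr opprK.
rewrite /=; case: (fibpair k) IH1 IH2 => a b /= IH1 IH2; split => //.
rewrite hornerD hornerM hornerX mulrDl -mulrA IH2 IH1 !exprS.
have tc1 : t * - t^-1 + 1 = 0 by rewrite mulrN divff // addNr.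
apply/eqP; rewrite -subr_eq0; apply/eqP.
transitivity ((t * - t^-1 + 1) * (t ^+ k - (- t^-1) ^+ k)); first by ring.
by rewrite tc1 mul0r.
Qed.

Lemma horner_fibpair_double (t : algC) k : t ^+ 2 = -1 ->
  (fibpair k).1.[2 * t] * t = k%:R * t ^+ k /\
  (fibpair k).2.[2 * t] * t = k.+1%:R * t ^+ k.+1.
Proof.
move=> t2; elim: k => [|k [IH1 IH2]]; first by rewrite /= !hornerE.
rewrite /=; case: (fibpair k) IH1 IH2 => a b /= IH1 IH2; split => //.
rewrite hornerD hornerM hornerX mulrDl -mulrA IH2 IH1 !exprS.
apply/eqP; rewrite -subr_eq0; apply/eqP.
transitivity (k%:R * (t ^+ 2 + 1) * t ^+ k); first by rewrite -!natr1; ring.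
by rewrite t2 addNr mulr0 mul0r.
Qed.

Lemma root_fibpoly_sqr_add4 k z : (0 < k)%N -> root (fibpoly k) z -> z ^+ 2 + 4 != 0.
Proof.
move=> k0 /rootP Fz0; apply/eqP => z24.
have t2 : (z / 2) ^+ 2 = -1.
  by rewrite expr_div_n -(addrK 4 (z ^+ 2)) z24 sub0r; field.
have t0 : z / 2 != 0.
  by apply/eqP => t0; move/eqP: t2; rewrite t0 expr0n eq_sym oppr_eq0 oner_eq0.
have [+ _] := horner_fibpair_double k t2.
have -> : 2 * (z / 2) = z by rewrite mulrC divfK ?pnatr_eq0.
rewrite Fz0 mul0r => /esym/eqP.
by rewrite mulf_eq0 pnatr_eq0 gtn_eqF //= (negPf (expf_neq0 k t0)).
Qed.

Lemma fibpoly_neq0 k : (0 < k)%N -> fibpoly k != 0.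
Proof.
move=> k0; apply/eqP => F0; have := root_fibpoly_sqr_add4 (z := 2 * 'i) k0.
by rewrite F0 root0 exprMn sqrCi => /(_ isT)/eqP; apply; ring.
Qed.

Lemma root_fibpoly_sub_inv k (t : algC) : (0 < k)%N -> t != 0 ->
  root (fibpoly k) (t - t^-1) = (- t ^+ 2 != 1) && ((- t ^+ 2) ^+ k == 1).
Proof.
move=> k0 t0; have ti : t / - t^-1 = - t ^+ 2 by rewrite invrN invrK mulrN expr2.
have [t2 | t2] := eqVneq (- t ^+ 2) 1.
  rewrite /=; apply/negbTE/negP => /(root_fibpoly_sqr_add4 k0)/negP; apply.
  have -> : (t - t^-1) ^+ 2 + 4 = (t ^+ 2 + 1) ^+ 2 / t ^+ 2 by field.
  by rewrite -(opprK (t ^+ 2)) t2 addNr expr0n mul0r.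
have c0 : t + t^-1 != 0.
  apply: contra t2 => /eqP tt; have : t * (t + t^-1) == 0 by rewrite tt mulr0.
  by rewrite mulrDr divff // -expr2 addr_eq0 => /eqP ->; rewrite opprK.
have b0 : (- t^-1) ^+ k != 0 by rewrite expf_neq0 // oppr_eq0 invr_eq0.
rewrite /root -(mulIr_eq0 _ (mulIf c0)) (horner_fibpair_sub_inv k t0).1 subr_eq0 /=.
by rewrite -ti expr_div_n; apply/eqP/eqP => [-> | /divr1_eq //]; rewrite divff.
Qed.

Lemma mem_fibroots k z : (0 < k)%N -> (z \in fibroots k) = root (fibpoly k) z.
Proof.
move=> k0; rewrite /fibroots; case: closed_field_poly_normal => r /= ->.
by rewrite rootZ ?root_prod_XsubC // lead_coef_eq0 fibpoly_neq0.
Qed.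

Definition fibotomic_roots (n : nat) : seq algC :=
  [seq z <- undup (fibroots n) | all (fun k => ~~ root (fibpoly k) z) (iota 1 n.-1)].

Lemma fibotomicE n : n != 1%N -> fibotomic n = \prod_(z <- fibotomic_roots n) ('X - z%:P).
Proof. by move=> n1; rewrite /fibotomic (negPf n1) big_filter. Qed.

Lemma mem_fibotomic_roots n t : (2 <= n)%N -> t != 0 ->
  (t - t^-1 \in fibotomic_roots n) = n.-primitive_root (- t ^+ 2).
Proof.
move=> n2 t0; have n0 : (0 < n)%N by apply: leq_trans n2.
rewrite mem_filter mem_undup mem_fibroots // root_fibpoly_sub_inv //.
set u := - t ^+ 2; apply/idP/idP => [/andP[/allP Fk /andP[u1 un]] | pu].
  have [d pd dn] := prim_order_exists n0 (eqP un).
  have d0 := prim_order_gt0 pd.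
  have [<- // | dNn] := eqVneq d n.
  have ltdn : (d < n)%N by rewrite ltn_neqAle dNn dvdn_leq.
  have := Fk d; rewrite mem_iota d0 add1n prednK // ltdn => /(_ isT).
  by rewrite root_fibpoly_sub_inv // u1 (prim_expr_order pd) eqxx.
have u1 : u != 1 by apply: contraTneq pu => ->; apply: contraTN n2 => /prim_root1 ->.
rewrite u1 (prim_expr_order pu) eqxx !andbT; apply/allP => k.
rewrite mem_iota add1n prednK // => /andP[k0 ltkn].
rewrite root_fibpoly_sub_inv // -/u u1 -(prim_order_dvd pu) /=.
by apply: contraTN ltkn => /(dvdn_leq k0); rewrite leqNgt.
Qed.

Definition sub_inv_roots (z : algC) : seq algC :=
  [:: (z + sqrtC (z ^+ 2 + 4)) / 2; (z - sqrtC (z ^+ 2 + 4)) / 2].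

Lemma prod_sub_inv_roots z t : \prod_(s <- sub_inv_roots z) (t - s) = t ^+ 2 - z * t - 1.
Proof.
rewrite !big_cons big_nil mulr1; set d := sqrtC _.
have d2 : d ^+ 2 = z ^+ 2 + 4 by rewrite sqrtCK.
transitivity (t ^+ 2 - z * t + (z ^+ 2 - d ^+ 2) / 4); first by field.
by rewrite d2; field.
Qed.

Lemma mem_sub_inv_roots z t : (t \in sub_inv_roots z) = (t != 0) && (t - t^-1 == z).
Proof.
have -> : (t \in sub_inv_roots z) = (\prod_(s <- sub_inv_roots z) (t - s) == 0).
  by rewrite !big_cons big_nil mulr1 mulf_eq0 !subr_eq0 !inE.
rewrite prod_sub_inv_roots; have [-> | t0] := eqVneq t 0.
  by rewrite expr0n mulr0 subrr sub0r oppr_eq0 oner_eq0.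
have -> : t ^+ 2 - z * t - 1 = t * (t - t^-1 - z) by rewrite !mulrBr mulfV // expr2; ring.
by rewrite mulf_eq0 (negPf t0) subr_eq0.
Qed.

Lemma uniq_sub_inv_roots z : z ^+ 2 + 4 != 0 -> uniq (sub_inv_roots z).
Proof.
rewrite /= inE andbT => z4; apply: contra z4 => /eqP /(congr1 (fun s => s * 2 - z)).
rewrite !divfK ?pnatr_eq0 // [X in X = _]addrAC [X in _ = X]addrAC subrr !add0r.
by move/eqP; rewrite eq_sym eqNr sqrtC_eq0.
Qed.

Definition sqrt_opp_roots (u : algC) : seq algC := [:: sqrtC (- u); - sqrtC (- u)].

Lemma mem_sqrt_opp_roots u t : (t \in sqrt_opp_roots u) = (- t ^+ 2 == u).
Proof. by rewrite !inE -eqf_sqr sqrtCK eqr_oppLR. Qed.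

Lemma uniq_sqrt_opp_roots u : u != 0 -> uniq (sqrt_opp_roots u).
Proof. by move=> u0; rewrite /= inE andbT eq_sym eqNr sqrtC_eq0 oppr_eq0. Qed.

Lemma prod_sqrt_opp_roots u t : \prod_(s <- sqrt_opp_roots u) (t - s) = t ^+ 2 + u.
Proof. by rewrite !big_cons big_nil mulr1 opprK -subr_sqr sqrtCK opprK. Qed.

Lemma perm_fibotomic_roots_fibres n : (2 <= n)%N ->
  perm_eq (flatten (map sub_inv_roots (fibotomic_roots n)))
          (flatten (map sqrt_opp_roots (prim_roots n))).
Proof.
move=> n2; have n0 : (0 < n)%N by apply: leq_trans n2.
have rootS z : z \in fibotomic_roots n -> root (fibpoly n) z.
  by rewrite mem_filter mem_undup mem_fibroots // => /andP[].
have [U1 M1] := @flatten_fibres _ _ (fibotomic_roots n) sub_inv_roots (fun s => s - s^-1)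
  (fun s => s != 0) (filter_uniq _ (undup_uniq _))
  (fun z zS => uniq_sub_inv_roots (root_fibpoly_sqr_add4 n0 (rootS z zS)))
  (fun z _ s => mem_sub_inv_roots z s).
have [U2 M2] := @flatten_fibres _ _ (prim_roots n) sqrt_opp_roots (fun s => - s ^+ 2) predT
  (uniq_prim_roots n) (fun u un => uniq_sqrt_opp_roots (prim_roots_neq0 un))
  (fun u _ s => mem_sqrt_opp_roots u s).
apply: uniq_perm => // s; rewrite M1 M2 /=; have [-> | s0] := eqVneq s 0.
  by rewrite expr0n oppr0; apply/esym/negP => /prim_roots_neq0; rewrite eqxx.
by rewrite mem_fibotomic_roots // mem_prim_roots.
Qed.

Lemma size_fibotomic_roots n : (2 <= n)%N -> size (fibotomic_roots n) = totient n.
Proof.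
move=> n2; move: (perm_size (perm_fibotomic_roots_fibres n2)).
rewrite !(@size_flatten_map_const _ _ _ _ 2) ?size_prim_roots //.
by move/eqP; rewrite eqn_pmul2l // => /eqP.
Qed.

Lemma fibotomic_sub_inv n t : (2 <= n)%N -> t != 0 ->
  (fibotomic n).[t - t^-1] * (- t) ^+ totient n = cyclo n (- t ^+ 2).
Proof.
move=> n2 t0; rewrite mulrC exprNn -mulrA.
have -> : t ^+ totient n * (fibotomic n).[t - t^-1] = \prod_(u <- prim_roots n) (t ^+ 2 + u).
  rewrite fibotomicE ?gtn_eqF // horner_prod -(size_fibotomic_roots n2) -prodrMl_seq.
  transitivity (\prod_(s <- flatten (map sub_inv_roots (fibotomic_roots n))) (t - s)).
    rewrite big_flatten big_map; apply: eq_bigr => z _.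
    by rewrite hornerXsubC prod_sub_inv_roots !mulrBr mulfV // expr2; ring.
  rewrite (perm_big _ (perm_fibotomic_roots_fibres n2)) big_flatten big_map.
  by apply: eq_bigr => u _; apply: prod_sqrt_opp_roots.
rewrite /cyclo -size_prim_roots -prodrMl_seq.
by apply: eq_bigr => u _; rewrite mulN1r opprD.
Qed.


Section FibotomicTransfer.
Variable t : algC.
Hypothesis t0 : t != 0.
Let tp0 k : t ^+ k != 0. Proof. exact: expf_neq0. Qed.

Lemma fibotomic_mul_dvd p m : prime p -> odd p -> (2 <= m)%N -> (p %| m)%N ->
  (fibotomic (p * m)).[t - t^-1] = (fibotomic m).[t ^+ p - t ^- p].
Proof.
move=> pp op m2 pm; have m0 : (0 < m)%N by apply: leq_trans m2.
have pm2 : (2 <= p * m)%N by rewrite (leq_trans m2) // leq_pmull // prime_gt0.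
have c0 : (- t ^+ p) ^+ totient m != 0 by rewrite expf_neq0 // oppr_eq0.
apply: (mulIf c0); rewrite fibotomic_sub_inv //.
have -> : (- t ^+ p) ^+ totient m = (- t) ^+ totient (p * m).
  by rewrite totient_mul_dvd // exprM (exprN_odd _ op).
by rewrite fibotomic_sub_inv // -cyclo_expr_dvd // (exprN_odd _ op) -!exprM mulnC.
Qed.

Lemma fibotomic_mul_ndvd p m : prime p -> odd p -> (2 <= m)%N -> ~~ (p %| m)%N ->
  (fibotomic (p * m)).[t - t^-1] * (fibotomic m).[t - t^-1]
    = (fibotomic m).[t ^+ p - t ^- p].
Proof.
move=> pp op m2 pm; have m0 : (0 < m)%N by apply: leq_trans m2.
have pm2 : (2 <= p * m)%N by rewrite (leq_trans m2) // leq_pmull // prime_gt0.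
have c0 : (- t ^+ p) ^+ totient m != 0 by rewrite expf_neq0 // oppr_eq0.
apply: (mulIf c0); rewrite fibotomic_sub_inv //.
have -> : (- t ^+ p) ^+ totient m = (- t) ^+ totient (p * m) * (- t) ^+ totient m.
  rewrite totient_coprime ?prime_coprime // (totient_prime pp) -exprD -mulSnr prednK.
    by rewrite exprM (exprN_odd _ op).
  exact: prime_gt0.
by rewrite mulrACA !fibotomic_sub_inv // -cyclo_expr_ndvd // (exprN_odd _ op) -!exprM mulnC.
Qed.

Lemma fibotomic_double_prime p : prime p -> odd p ->
  (t - t^-1) * (fibotomic (2 * p)).[t - t^-1] = t ^+ p - t ^- p.
Proof.
move=> pp op; have p2 : (2 <= 2 * p)%N by rewrite leq_pmulr // prime_gt0.
have [p' pE] : exists p', p = p'.+1 by exists p.-1; rewrite prednK // prime_gt0.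
have ep' : ~~ odd p' by move: op; rewrite pE.
have tp : t ^+ p = t * (- t) ^+ totient (2 * p).
  by rewrite totient_double_odd // (totient_prime pp) pE /= exprNn -signr_odd (negPf ep') mul1r exprS.
have tp2 : (t ^+ p) ^+ 2 = (t ^+ 2) ^+ p by rewrite -!exprM mulnC.
apply: (mulfI (tp0 p)); rewrite mulrBr divff // -expr2 tp2 -cyclo_prime //.
transitivity ((t * (t - t^-1)) * ((fibotomic (2 * p)).[t - t^-1] * (- t) ^+ totient (2 * p))).
  by rewrite tp; ring.
rewrite fibotomic_sub_inv // cyclo_double_odd // (totient_prime pp) pE -signr_odd (negPf ep').
by rewrite mul1r opprK mulrBr divff // expr2.
Qed.

Lemma fibotomic_double_even m : (2 %| m)%N -> (2 <= m)%N ->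
  (fibotomic (2 * m)).[t - t^-1]
    = (- 'i) ^+ totient m * (fibotomic m).['i * t ^+ 2 - ('i * t ^+ 2)^-1].
Proof.
move=> em m2; have m0 : (0 < m)%N by apply: leq_trans m2.
have m4 : (2 <= 2 * m)%N by rewrite leq_pmulr.
have s0 : 'i * t ^+ 2 != 0 by rewrite mulf_neq0 ?neq0Ci.
have c0 : (- ('i * t ^+ 2)) ^+ totient m != 0 by rewrite expf_neq0 // oppr_eq0.
have e : (- ('i * t ^+ 2)) ^+ totient m = (- 'i) ^+ totient m * (- t) ^+ totient (2 * m).
  by rewrite totient_mul_dvd // exprM sqrrN -exprMn mulNr.
apply: (mulIf c0); rewrite -mulrA fibotomic_sub_inv // e mulrCA fibotomic_sub_inv //.
have -> : - ('i * t ^+ 2) ^+ 2 = (- t ^+ 2) ^+ 2 by rewrite exprMn sqrCi mulN1r opprK sqrrN.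
by rewrite -cyclo_expr_dvd.
Qed.

Lemma fibotomic_double_odd m : odd m -> (2 <= m)%N ->
  (fibotomic (2 * m)).[t - t^-1]
    = (- 'i) ^+ totient m * (fibotomic m).['i * t - ('i * t)^-1].
Proof.
move=> om m2; have m4 : (2 <= 2 * m)%N by rewrite leq_pmulr // (leq_trans _ m2).
have s0 : 'i * t != 0 by rewrite mulf_neq0 ?neq0Ci.
have c0 : (- ('i * t)) ^+ totient m != 0 by rewrite expf_neq0 // oppr_eq0.
have e : (- ('i * t)) ^+ totient m = 'i ^+ totient m * (- t) ^+ totient (2 * m).
  by rewrite totient_double_odd // -exprMn mulrN.
apply: (mulIf c0); rewrite -mulrA fibotomic_sub_inv // e mulrCA fibotomic_sub_inv //.
by rewrite cyclo_double_odd // mulrA -exprMn mulrN1 exprMn sqrCi mulN1r !opprK.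
Qed.

End FibotomicTransfer.

Theorem mainTheorem6 (p m : nat) (x : algC) :
  prime p -> (2 <= m)%N -> x \is Num.real ->
  let w := (x + sqrtC (x ^+ 2 + 4)) / 2 in
  [/\
   (* (a) *)
   (p = 2%N -> (2 %| m)%N ->
      (m = 2%N ->
         (fibotomic (p * m)).[x]
           = - 'i ^+ totient m * (fibotomic m).['i * w ^+ 2 - ('i * w ^+ 2)^-1]
         /\ (fibotomic (p * m)).[x]
           = - 'i ^+ totient m * (fibotomic m).['i * (x ^+ 2 + 2)])
      /\
      ((3 <= m)%N ->
         (fibotomic (p * m)).[x]
           = 'i ^+ totient m * (fibotomic m).['i * w ^+ 2 - ('i * w ^+ 2)^-1]
         /\ (fibotomic (p * m)).[x]
           = 'i ^+ totient m * (fibotomic m).['i * (x ^+ 2 + 2)])),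
   (* (b) *)
   (p = 2%N -> ~~ (2 %| m)%N ->
      (fibotomic (p * m)).[x]
        = 'i ^+ totient m * (fibotomic m).['i * w - ('i * w)^-1]
      /\ (fibotomic (p * m)).[x]
        = 'i ^+ totient m * (fibotomic m).['i * sqrtC (x ^+ 2 + 4)]),
   (* (c) *)
   ((2 < p)%N -> (p %| m)%N ->
      (fibotomic (p * m)).[x] = (fibotomic m).[w ^+ p - w ^- p]
      /\ (fibotomic (p * m)).[x] = (fibotomic m).[x * (fibotomic (2 * p)).[x]])
   &
   (* (d) *)
   ((2 < p)%N -> ~~ (p %| m)%N -> (fibotomic m).[x] != 0 ->
      (fibotomic (p * m)).[x]
        = (fibotomic m).[w ^+ p - w ^- p] / (fibotomic m).[w - w^-1]
      /\ (fibotomic (p * m)).[x]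
        = (fibotomic m).[x * (fibotomic (2 * p)).[x]] / (fibotomic m).[x])].
Proof.
move=> pp m2 _ w.
have /andP[w0 /eqP wx] : (w != 0) && (w - w^-1 == x) by rewrite -mem_sub_inv_roots mem_head.
have ws : w + w^-1 = sqrtC (x ^+ 2 + 4).
  have -> : w^-1 = w - x by rewrite -wx; ring.
  by rewrite /w; field.
have iw2 : 'i * w ^+ 2 - ('i * w ^+ 2)^-1 = 'i * (x ^+ 2 + 2).
  by rewrite -wx invfM invCi; field.
have iw : 'i * w - ('i * w)^-1 = 'i * sqrtC (x ^+ 2 + 4) by rewrite -ws invfM invCi; field.
have oddp : (2 < p)%N -> odd p by move=> p2; case: (even_prime pp) p2 => // ->.
have wp_sub : odd p -> x * (fibotomic (2 * p)).[x] = w ^+ p - w ^- p.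
  by move=> op; rewrite -(fibotomic_double_prime w0 pp op) wx.
split.
- move=> -> em; have := fibotomic_double_even w0 em m2; rewrite wx => ->.
  rewrite -iw2; split => [-> | m3]; last by rewrite exprNi_totient.
  by rewrite (totient_prime (isT : prime 2)) !expr1.
- move=> -> om; rewrite dvdn2 negbK in om.
  have m3 : (2 < m)%N by rewrite ltn_neqAle m2 andbT; apply: contraTneq om => <-.
  by have := fibotomic_double_odd w0 om m2; rewrite wx => ->; rewrite -iw exprNi_totient.
- move=> /oddp op pm; rewrite (wp_sub op).
  by have := fibotomic_mul_dvd w0 pp op m2 pm; rewrite wx => ->.
- move=> /oddp op pm Fm0; rewrite (wp_sub op).
  by have := fibotomic_mul_ndvd w0 pp op m2 pm; rewrite wx => <-; rewrite mulfK.
Qed.
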